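(* Let $(y_i,x_i)\in\mathbb{R}^3\times\mathbb{R}^3$ be a point pair. There is a symmetric $4\times 4$ matrix $Q_i$ such that for every rotation $R_0\in SO(3)$ and every unit quaternion representation $w_0\in\mathbb{S}^3$ of $R_0$, $$\|y_i-R_0x_i\|_2^2=w_0^\top Q_i w_0 .$$ Moreover, $Q_i$ is positive semidefinite and its eigenvalues (counted with multiplicity) are $$(\|y_i\|_2+\|x_i\|_2)^2,\ (\|y_i\|_2+\|x_i\|_2)^2,\ (\|y_i\|_2-\|x_i\|_2)^2,\ (\|y_i\|_2-\|x_i\|_2)^2 .$$
   Context: $\mathbb{S}^3$ is the unit sphere in $\mathbb{R}^4$. For $w=[w_1;w_2;w_3;w_4]\in\mathbb{S}^3$ let $$R(w)=\begin{bmatrix} w_1^2+w_2^2-w_3^2-w_4^2 & 2(w_2w_3-w_1w_4) & 2(w_2w_4+w_1w_3)\\ 2(w_2w_3+w_1w_4) & w_1^2+w_3^2-w_2^2-w_4^2 & 2(w_3w_4-w_1w_2)\\ 2(w_2w_4-w_1w_3) & 2(w_3w_4+w_1w_2) & w_1^2+w_4^2-w_2^2-w_3^2\end{bmatrix}.$$ Every $R(w)$ is in $SO(3)$ and every $R\in SO(3)$ equals $R(w)$ for exactly two unit quaternions $\pm w$, called the unit quaternion representations of $R$. *)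

From HB Require Import structures.
From mathcomp Require Import all_boot all_order all_algebra.
Set Implicit Arguments. Unset Strict Implicit. Unset Printing Implicit Defensive.
Import Order.TTheory GRing.Theory Num.Theory.
Local Open Scope ring_scope.

Definition norm2 (R : rcfType) (n : nat) (v : 'cV[R]_n) : R :=
  Num.sqrt (\sum_(i < n) v i 0 ^+ 2).

Definition isSO3 (R : rcfType) (M : 'M[R]_3) : Prop :=
  M^T *m M = 1%:M /\ \det M = 1.

Definition inS3 (R : rcfType) (w : 'cV[R]_4) : Prop :=
  \sum_(i < 4) w i 0 ^+ 2 = 1.

Definition quatR (R : rcfType) (w : 'cV[R]_4) : 'M[R]_3 :=
  let w1 := w (inord 0) 0 in let w2 := w (inord 1) 0 in
  let w3 := w (inord 2) 0 in let w4 := w (inord 3) 0 in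
  \matrix_(i < 3, j < 3)
    match nat_of_ord i, nat_of_ord j with
    | 0, 0 => w1^+2 + w2^+2 - w3^+2 - w4^+2
    | 0, 1 => 2 * (w2 * w3 - w1 * w4)
    | 0, _ => 2 * (w2 * w4 + w1 * w3)
    | 1, 0 => 2 * (w2 * w3 + w1 * w4)
    | 1, 1 => w1^+2 + w3^+2 - w2^+2 - w4^+2
    | 1, _ => 2 * (w3 * w4 - w1 * w2)
    | _, 0 => 2 * (w2 * w4 - w1 * w3)
    | _, 1 => 2 * (w3 * w4 + w1 * w2)
    | _, _ => w1^+2 + w4^+2 - w2^+2 - w3^+2
    end.

Definition quat_rep (R : rcfType) (w : 'cV[R]_4) (M : 'M[R]_3) : Prop :=
  inS3 w /\ quatR w = M.

Definition symmetric_mx (R : rcfType) (n : nat) (Q : 'M[R]_n) : Prop := Q^T = Q.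

Definition psd_mx (R : rcfType) (n : nat) (Q : 'M[R]_n) : Prop :=
  forall v : 'cV[R]_n, 0 <= (v^T *m Q *m v) 0 0.

Definition qform (R : rcfType) (n : nat) (Q : 'M[R]_n) (w : 'cV[R]_n) : R :=
  (w^T *m Q *m w) 0 0.

From HB Require Import structures.
From mathcomp Require Import all_boot all_order all_algebra.
From mathcomp Require Import ring.
Set Implicit Arguments. Unset Strict Implicit. Unset Printing Implicit Defensive.
Import Order.TTheory GRing.Theory Num.Theory.
Local Open Scope ring_scope.

(* Read x and y as pure quaternions.  For a unit quaternion w, R(w) x = w x w^*,
   so |y - R(w) x| = |y w - w x| = |M w| with M = L(y) - R(x), where L(y) and
   R(x) are the matrices of left multiplication by y and right multiplication
   by x.  Hence Q = M^T M is symmetric and positive semidefinite.  L(y) and R(x)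
   are antisymmetric, commute, and square to -|y|^2 and -|x|^2, so
   Q = (|y|^2 + |x|^2) I + 2 L(y) R(x), and L(y) R(x), whose square is
   |y|^2 |x|^2 I, has eigenvalues +-|y||x|, each twice:
   det (c I - 2 L(y) R(x)) = (c^2 - 4 |y|^2 |x|^2)^2. *)

Lemma sum_ord3 (V : nmodType) (F : 'I_3 -> V) :
  \sum_(i < 3) F i = F (inord 0) + F (inord 1) + F (inord 2).
Proof.
rewrite !big_ord_recl big_ord0 addr0 !addrA.
by congr (_ + _ + _); congr F; apply/val_inj; rewrite /= inordK.
Qed.

Lemma sum_ord4 (V : nmodType) (F : 'I_4 -> V) :
  \sum_(i < 4) F i = F (inord 0) + F (inord 1) + F (inord 2) + F (inord 3).
Proof.
rewrite !big_ord_recl big_ord0 addr0 !addrA.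
by congr (_ + _ + _ + _); congr F; apply/val_inj; rewrite /= inordK.
Qed.

Section SmallDeterminants.
Variable S : comNzRingType.

Lemma det_mx33 (f : nat -> nat -> S) :
  \det (\matrix_(i < 3, j < 3) f i j) =
      f 0%N 0%N * (f 1%N 1%N * f 2%N 2%N - f 1%N 2%N * f 2%N 1%N)
    - f 0%N 1%N * (f 1%N 0%N * f 2%N 2%N - f 1%N 2%N * f 2%N 0%N)
    + f 0%N 2%N * (f 1%N 0%N * f 2%N 1%N - f 1%N 1%N * f 2%N 0%N).
Proof.
rewrite (expand_det_row _ ord0) !big_ord_recl big_ord0 /cofactor.
rewrite !(expand_det_row _ ord0) !big_ord_recl !big_ord0 /cofactor !det_mx11 !mxE.
ring.
Qed.

Lemma det_mx44 (f : nat -> nat -> S) :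
  let m3 (c0 c1 c2 : nat) :=
      f 1%N c0 * (f 2%N c1 * f 3%N c2 - f 2%N c2 * f 3%N c1)
    - f 1%N c1 * (f 2%N c0 * f 3%N c2 - f 2%N c2 * f 3%N c0)
    + f 1%N c2 * (f 2%N c0 * f 3%N c1 - f 2%N c1 * f 3%N c0) in
  \det (\matrix_(i < 4, j < 4) f i j) =
      f 0%N 0%N * m3 1%N 2%N 3%N - f 0%N 1%N * m3 0%N 2%N 3%N
    + f 0%N 2%N * m3 0%N 1%N 3%N - f 0%N 3%N * m3 0%N 1%N 2%N.
Proof.
rewrite /= (expand_det_row _ ord0) !big_ord_recl big_ord0 /cofactor.
have minor j : row' ord0 (col' j (\matrix_(i < 4, j < 4) f i j)) =
               \matrix_(i < 3, k < 3) f i.+1 (bump j k).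
  by apply/matrixP => i k; rewrite !mxE.
rewrite !minor !(det_mx33 (fun i k => f i.+1 (bump _ k))) !mxE.
ring.
Qed.

End SmallDeterminants.

Definition sqnorm (S : pzSemiRingType) n (v : 'cV[S]_n) : S := \sum_(i < n) v i 0 ^+ 2.

Lemma sqnorm_map (S T : pzSemiRingType) (f : {rmorphism S -> T}) n (v : 'cV[S]_n) :
  sqnorm (map_mx f v) = f (sqnorm v).
Proof. by rewrite /sqnorm rmorph_sum; apply: eq_bigr => i _; rewrite mxE rmorphXn. Qed.

Section QuaternionMultiplication.
Variable S : comNzRingType.
Implicit Types v y x : 'cV[S]_3.

(* Entries of the matrices of q |-> v q and q |-> q v in the basis (1, i, j, k),
   for v read as the pure quaternion (0, v). *)
Definition quat_lmul v (m n : nat) : S :=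
  let v1 := v (inord 0) 0 in let v2 := v (inord 1) 0 in let v3 := v (inord 2) 0 in
  match m, n with
  | 0, 1 => - v1 | 0, 2 => - v2 | 0, 3 => - v3
  | 1, 0 => v1   | 1, 2 => - v3 | 1, 3 => v2
  | 2, 0 => v2   | 2, 1 => v3   | 2, 3 => - v1
  | 3, 0 => v3   | 3, 1 => - v2 | 3, 2 => v1
  | _, _ => 0
  end.

Definition quat_rmul v (m n : nat) : S :=
  let v1 := v (inord 0) 0 in let v2 := v (inord 1) 0 in let v3 := v (inord 2) 0 in
  match m, n with
  | 0, 1 => - v1 | 0, 2 => - v2 | 0, 3 => - v3
  | 1, 0 => v1   | 1, 2 => v3   | 1, 3 => - v2
  | 2, 0 => v2   | 2, 1 => - v3 | 2, 3 => v1
  | 3, 0 => v3   | 3, 1 => v2   | 3, 2 => - v1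
  | _, _ => 0
  end.

Definition quat_lmx v : 'M[S]_4 := \matrix_(i < 4, j < 4) quat_lmul v i j.
Definition quat_rmx v : 'M[S]_4 := \matrix_(i < 4, j < 4) quat_rmul v i j.

Lemma trmx_quat_lmx v : (quat_lmx v)^T = - quat_lmx v.
Proof.
apply/matrixP => i j; rewrite !mxE.
by case: i j => [[|[|[|[|//]]]] ?] [[|[|[|[|//]]]] ?] /=; rewrite ?opprK ?oppr0.
Qed.

Lemma trmx_quat_rmx v : (quat_rmx v)^T = - quat_rmx v.
Proof.
apply/matrixP => i j; rewrite !mxE.
by case: i j => [[|[|[|[|//]]]] ?] [[|[|[|[|//]]]] ?] /=; rewrite ?opprK ?oppr0.
Qed.

Lemma quat_lmx_sqr v : quat_lmx v *m quat_lmx v = - (sqnorm v)%:M.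
Proof.
apply/matrixP => i j; rewrite !mxE sum_ord4 /sqnorm sum_ord3 !mxE !inordK //.
by case: i j => [[|[|[|[|//]]]] ?] [[|[|[|[|//]]]] ?] /=; ring.
Qed.

Lemma quat_rmx_sqr v : quat_rmx v *m quat_rmx v = - (sqnorm v)%:M.
Proof.
apply/matrixP => i j; rewrite !mxE sum_ord4 /sqnorm sum_ord3 !mxE !inordK //.
by case: i j => [[|[|[|[|//]]]] ?] [[|[|[|[|//]]]] ?] /=; ring.
Qed.

Lemma quat_lmx_rmxC y x : quat_lmx y *m quat_rmx x = quat_rmx x *m quat_lmx y.
Proof.
apply/matrixP => i j; rewrite !mxE !sum_ord4 !mxE !inordK //.
by case: i j => [[|[|[|[|//]]]] ?] [[|[|[|[|//]]]] ?] /=; ring.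
Qed.

Lemma det_quat_lrmx c y x :
  \det (c%:M - (quat_lmx y *m quat_rmx x) *+ 2) =
  (c ^+ 2 - 4 * sqnorm y * sqnorm x) ^+ 2.
Proof.
pose f m n := c *+ (m == n) -
  (quat_lmul y m 0 * quat_rmul x 0 n + quat_lmul y m 1 * quat_rmul x 1 n +
   quat_lmul y m 2 * quat_rmul x 2 n + quat_lmul y m 3 * quat_rmul x 3 n) *+ 2.
have -> : c%:M - (quat_lmx y *m quat_rmx x) *+ 2 = \matrix_(i < 4, j < 4) f i j.
  by apply/matrixP => i j; rewrite !mxE sum_ord4 !mxE !inordK.
rewrite det_mx44 /f /sqnorm !sum_ord3 /=.
ring.
Qed.

Definition quat_cost_mx y x : 'M[S]_4 :=
  (quat_lmx y - quat_rmx x)^T *m (quat_lmx y - quat_rmx x).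

Lemma quat_cost_mxE y x :
  quat_cost_mx y x = (sqnorm y + sqnorm x)%:M + (quat_lmx y *m quat_rmx x) *+ 2.
Proof.
have trN : (quat_lmx y - quat_rmx x)^T = - (quat_lmx y - quat_rmx x).
  by rewrite linearB /= trmx_quat_lmx trmx_quat_rmx opprB addrC opprK.
rewrite /quat_cost_mx trN mulNmx mulmxBl !mulmxBr quat_lmx_sqr quat_rmx_sqr.
rewrite -quat_lmx_rmxC [(_ + _)%:M]raddfD /= mulr2n !opprB !opprK.
by rewrite [LHS]addrACA [LHS]addrC [_%:M + _%:M]addrC.
Qed.

End QuaternionMultiplication.

Section MapQuaternion.
Variables (S T : comNzRingType) (f : {rmorphism S -> T}).

Lemma map_quat_lmx (v : 'cV[S]_3) : map_mx f (quat_lmx v) = quat_lmx (map_mx f v).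
Proof.
apply/matrixP => i j; rewrite !mxE.
by case: i j => [[|[|[|[|//]]]] ?] [[|[|[|[|//]]]] ?]; rewrite /= ?mxE ?rmorphN ?rmorph0.
Qed.

Lemma map_quat_rmx (v : 'cV[S]_3) : map_mx f (quat_rmx v) = quat_rmx (map_mx f v).
Proof.
apply/matrixP => i j; rewrite !mxE.
by case: i j => [[|[|[|[|//]]]] ?] [[|[|[|[|//]]]] ?]; rewrite /= ?mxE ?rmorphN ?rmorph0.
Qed.

End MapQuaternion.

Lemma char_poly_quat_cost (R : comNzRingType) (y x : 'cV[R]_3) :
  char_poly (quat_cost_mx y x) =
  (('X - (sqnorm y + sqnorm x)%:P) ^+ 2 - (4 * sqnorm y * sqnorm x)%:P) ^+ 2.
Proof.
rewrite /char_poly /char_poly_mx quat_cost_mxE map_mxD map_scalar_mx.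
rewrite mulr2n map_mxD map_mxM map_quat_lmx map_quat_rmx -mulr2n.
rewrite opprD addrA -[_%:M - _%:M]raddfB /= det_quat_lrmx !sqnorm_map.
by rewrite !polyCM polyC_natr.
Qed.

Section GramMatrix.
Variable R : rcfType.

Lemma sqr_norm2 n (v : 'cV[R]_n) : norm2 v ^+ 2 = sqnorm v.
Proof. by rewrite sqr_sqrtr // sumr_ge0 // => i _; rewrite sqr_ge0. Qed.

Lemma qform_gram m n (M : 'M[R]_(m, n)) (w : 'cV[R]_n) :
  qform (M^T *m M) w = sqnorm (M *m w).
Proof.
rewrite /qform mulmxA -mulmxA -trmx_mul mxE.
by apply: eq_bigr => i _; rewrite mxE expr2.
Qed.

Lemma symmetric_gram m n (M : 'M[R]_(m, n)) : symmetric_mx (M^T *m M).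
Proof. by rewrite /symmetric_mx trmx_mul trmxK. Qed.

Lemma psd_gram m n (M : 'M[R]_(m, n)) : psd_mx (M^T *m M).
Proof.
move=> v; rewrite -/(qform _ v) qform_gram.
by apply: sumr_ge0 => i _; apply: sqr_ge0.
Qed.

End GramMatrix.

Lemma sqr_norm2_quatR_resid (R : rcfType) (y x : 'cV[R]_3) (w : 'cV[R]_4) :
  inS3 w -> norm2 (y - quatR w *m x) ^+ 2 = qform (quat_cost_mx y x) w.
Proof.
rewrite /inS3 -/(sqnorm w) sqr_norm2 /quat_cost_mx qform_gram => w_unit.
(* R(w) is |w|^2 times a rotation and |y w - w x| = |y - w x w^*| |w|. *)
have defect : sqnorm (y - quatR w *m x) - sqnorm ((quat_lmx y - quat_rmx x) *m w) =
              (sqnorm w - 1) * (sqnorm w * sqnorm x - sqnorm y).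
  rewrite /sqnorm !sum_ord3 !sum_ord4 !mxE !sum_ord3 !sum_ord4 !mxE !inordK //=.
  ring.
by apply/eqP; rewrite -subr_eq0 defect w_unit subrr mul0r.
Qed.

Theorem lemma2p1 (R : rcfType) (y x : 'cV[R]_3) :
  exists Q : 'M[R]_4,
    [/\ symmetric_mx Q,
        (forall (R0 : 'M[R]_3) (w0 : 'cV[R]_4),
            isSO3 R0 -> quat_rep w0 R0 ->
            norm2 (y - R0 *m x) ^+ 2 = qform Q w0),
        psd_mx Q
      & char_poly Q =
          ('X - ((norm2 y + norm2 x) ^+ 2)%:P) ^+ 2 *
          ('X - ((norm2 y - norm2 x) ^+ 2)%:P) ^+ 2].
Proof.
exists (quat_cost_mx y x); split.
- exact: symmetric_gram.
- by move=> R0 w _ [w_unit <-]; apply: sqr_norm2_quatR_resid.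
- exact: psd_gram.
- by rewrite char_poly_quat_cost -!sqr_norm2; ring.
Qed.
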